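(* Let $g\in G=\mathrm{PSL}(2,\mathbb{C})^q\times\mathrm{PSL}(2,\mathbb{R})^r$ be elliptic of infinite order and $h\in G$ loxodromic. Then there are positive integers $m,n$ such that $g^mh^n$ and $h^ng^m$ are loxodromic.
   Context: An element $g=(g_1,\dots,g_{q+r})\in G$ is elliptic (resp. loxodromic) if every component $g_i$ is an elliptic (resp. loxodromic) element of $\mathrm{PSL}(2,\mathbb{C})$. *)

From Stdlib Require Import Reals.
Open Scope R_scope.

Record C := mkC { Re : R ; Im : R }.
Definition C0 : C := mkC 0 0.
Definition C1 : C := mkC 1 0.
Definition Cadd (z w : C) : C := mkC (Re z + Re w) (Im z + Im w).
Definition Copp (z : C) : C := mkC (- Re z) (- Im z).
Definition Cmul (z w : C) : C :=
  mkC (Re z * Re w - Im z * Im w) (Re z * Im w + Im z * Re w).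

Record M2 := mkM2 { ma : C ; mb : C ; mc : C ; md : C }.
Definition Mid : M2 := mkM2 C1 C0 C0 C1.
Definition Mneg (A : M2) : M2 := mkM2 (Copp (ma A)) (Copp (mb A)) (Copp (mc A)) (Copp (md A)).
Definition Mmul (A B : M2) : M2 :=
  mkM2 (Cadd (Cmul (ma A) (ma B)) (Cmul (mb A) (mc B)))
       (Cadd (Cmul (ma A) (mb B)) (Cmul (mb A) (md B)))
       (Cadd (Cmul (mc A) (ma B)) (Cmul (md A) (mc B)))
       (Cadd (Cmul (mc A) (mb B)) (Cmul (md A) (md B))).
Fixpoint Mpow (A : M2) (n : nat) : M2 :=
  match n with O => Mid | S k => Mmul A (Mpow A k) end.
Definition Mdet (A : M2) : C := Cadd (Cmul (ma A) (md A)) (Copp (Cmul (mb A) (mc A))).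
Definition Mtr (A : M2) : C := Cadd (ma A) (md A).

Definition inSL2C (A : M2) : Prop := Mdet A = C1.
Definition inSL2R (A : M2) : Prop :=
  inSL2C A /\ Im (ma A) = 0 /\ Im (mb A) = 0 /\ Im (mc A) = 0 /\ Im (md A) = 0.

(** An element of PSL(2,C) is represented by a lift A in SL(2,C); A and -A
    represent the same element.  Ellipticity / loxodromicity depend only on
    the trace up to sign, hence are well defined on PSL(2,C). *)
Definition PSL_eq (A B : M2) : Prop := A = B \/ A = Mneg B.
Definition PSL_is_id (A : M2) : Prop := PSL_eq A Mid.

Definition elliptic2 (A : M2) : Prop :=
  Im (Mtr A) = 0 /\ -2 < Re (Mtr A) < 2.
Definition loxodromic2 (A : M2) : Prop :=
  ~ (Im (Mtr A) = 0 /\ -2 <= Re (Mtr A) <= 2).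

(** G = PSL(2,C)^q x PSL(2,R)^r.  An element is a pair (gc, gr) of families of
    lifts; only indices i < q (resp. j < r) are meaningful. *)
Definition Gelt : Type := ((nat -> M2) * (nat -> M2))%type.

Definition inG (q r : nat) (g : Gelt) : Prop :=
  (forall i, (i < q)%nat -> inSL2C (fst g i)) /\
  (forall j, (j < r)%nat -> inSL2R (snd g j)).

Definition Gmul (g h : Gelt) : Gelt :=
  (fun i => Mmul (fst g i) (fst h i), fun j => Mmul (snd g j) (snd h j)).
Definition Gpow (g : Gelt) (n : nat) : Gelt :=
  (fun i => Mpow (fst g i) n, fun j => Mpow (snd g j) n).

Definition G_is_id (q r : nat) (g : Gelt) : Prop :=
  (forall i, (i < q)%nat -> PSL_is_id (fst g i)) /\
  (forall j, (j < r)%nat -> PSL_is_id (snd g j)).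

Definition infinite_order (q r : nat) (g : Gelt) : Prop :=
  forall k : nat, (0 < k)%nat -> ~ G_is_id q r (Gpow g k).

Definition elliptic (q r : nat) (g : Gelt) : Prop :=
  (forall i, (i < q)%nat -> elliptic2 (fst g i)) /\
  (forall j, (j < r)%nat -> elliptic2 (snd g j)).
Definition loxodromic (q r : nat) (g : Gelt) : Prop :=
  (forall i, (i < q)%nat -> loxodromic2 (fst g i)) /\
  (forall j, (j < r)%nat -> loxodromic2 (snd g j)).

(* [Reals] is loaded first, as its binomial coefficient [C] would shadow [Defs.C]. *)
From Stdlib Require Import Reals Lra Lia Psatz Classical.
From Pilot Require Import Defs.
Open Scope R_scope.

(* In each factor let
   [B] be the loxodromic component of [h], with eigenvalues [l], [u], [|l| > 1],
   and [A] the component of [g].  For fixed [m] the traces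
   [x_m(n) = tr (A^m B^n)] satisfy [x_m(n+2) = tr B x_m(n+1) - x_m(n)], hence
   [x_m(n) = (a_m l^n - b_m u^n)/(l - u)] and [|x_m(n)| -> oo] as soon as
   [d(m) = a_m = x_m(1) - u x_m(0)] is nonzero.  In turn [d] satisfies the same
   kind of recurrence in [m], driven by [tr A], with [d(0) = l - u <> 0]; such a
   sequence either has at most one zero or is, up to a nonzero factor,
   geometric along an arithmetic progression, so it is nonzero on all large
   multiples of some period.  Periods of finitely many factors multiply. *)

Lemma Ceq (z w : C) : Re z = Re w -> Im z = Im w -> z = w.
Proof. destruct z, w; simpl; intros -> ->; reflexivity. Qed.

Ltac Cring := apply Ceq; simpl; ring.

Definition Csub (z w : C) : C := Cadd z (Copp w).

Fixpoint Cpow (z : C) (n : nat) : C :=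
  match n with O => C1 | S k => Cmul z (Cpow z k) end.

Definition Cnorm2 (z : C) : R := Re z * Re z + Im z * Im z.

Lemma Cnorm2_ge0 (z : C) : 0 <= Cnorm2 z.
Proof. unfold Cnorm2; nra. Qed.

Lemma Cnorm2_mul (z w : C) : Cnorm2 (Cmul z w) = Cnorm2 z * Cnorm2 w.
Proof. unfold Cnorm2; simpl; ring. Qed.

Lemma Cnorm2_pow (z : C) (n : nat) : Cnorm2 (Cpow z n) = Cnorm2 z ^ n.
Proof.
  induction n as [|n IHn]; simpl.
  - unfold Cnorm2; simpl; ring.
  - rewrite Cnorm2_mul, IHn; reflexivity.
Qed.

Lemma Cnorm2_add_le (z w : C) : Cnorm2 (Cadd z w) <= 2 * (Cnorm2 z + Cnorm2 w).
Proof.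
  destruct z as [a b], w as [c d]; unfold Cnorm2; simpl.
  pose proof (Rle_0_sqr (a - c)); pose proof (Rle_0_sqr (b - d)); unfold Rsqr in *. nra.
Qed.

Lemma Cnorm2_eq0 (z : C) : Cnorm2 z = 0 -> z = C0.
Proof. unfold Cnorm2; intro H; apply Ceq; simpl; nra. Qed.

Lemma Cnorm2_gt0 (z : C) : z <> C0 -> 0 < Cnorm2 z.
Proof.
  intro Hz. destruct (Rle_lt_or_eq_dec _ _ (Cnorm2_ge0 z)) as [Hlt | Heq]; [exact Hlt |].
  now destruct Hz; apply Cnorm2_eq0.
Qed.

Lemma Cmul_eq0 (z w : C) : Cmul z w = C0 -> w <> C0 -> z = C0.
Proof.
  intros Hzw Hw. apply Cnorm2_eq0. pose proof (Cnorm2_gt0 _ Hw). pose proof (Cnorm2_ge0 z).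
  assert (Hn : Cnorm2 (Cmul z w) = 0) by (rewrite Hzw; unfold Cnorm2; simpl; ring).
  rewrite Cnorm2_mul in Hn. nra.
Qed.

Lemma Cmul_neq0 (z w : C) : z <> C0 -> w <> C0 -> Cmul z w <> C0.
Proof. intros Hz Hw Hzw. exact (Hz (Cmul_eq0 _ _ Hzw Hw)). Qed.

Lemma Cpow_neq0 (z : C) (n : nat) : z <> C0 -> Cpow z n <> C0.
Proof.
  intro Hz. induction n as [|n IHn]; simpl; [| now apply Cmul_neq0].
  intro E; apply (f_equal Re) in E; simpl in E; lra.
Qed.

Lemma C1_neq0 : C1 <> C0.
Proof. intro E; apply (f_equal Re) in E; simpl in E; lra. Qed.

Lemma Csub_eq0 (z w : C) : Csub z w = C0 -> z = w.
Proof. intro E; apply Ceq; [apply (f_equal Re) in E | apply (f_equal Im) in E]; simpl in E; lra. Qed.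

Lemma Csqrt_exists (w : C) : exists s, Cmul s s = w.
Proof.
  destruct w as [a b].
  set (r := sqrt (a * a + b * b)).
  assert (Hr0 : 0 <= r) by apply sqrt_pos.
  assert (Hrr : r * r = a * a + b * b) by (apply sqrt_sqrt; nra).
  set (x := sqrt ((r + a) / 2)). set (y := sqrt ((r - a) / 2)).
  assert (Hx : x * x = (r + a) / 2) by (apply sqrt_sqrt; nra).
  assert (Hy : y * y = (r - a) / 2) by (apply sqrt_sqrt; nra).
  assert (Hx0 : 0 <= x) by apply sqrt_pos.
  assert (Hy0 : 0 <= y) by apply sqrt_pos.
  assert (Hxy : (2 * x * y) * (2 * x * y) = b * b) by nra.
  destruct (Rle_or_lt 0 b) as [Hb | Hb].
  - assert (E : 2 * x * y = b) by (apply Rsqr_inj; unfold Rsqr; nra).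
    exists (mkC x y). apply Ceq; simpl; nra.
  - assert (E : 2 * x * y = - b) by (apply Rsqr_inj; unfold Rsqr; nra).
    exists (mkC x (- y)). apply Ceq; simpl; nra.
Qed.

Lemma quadratic_roots (t : C) : exists l u, Cadd l u = t /\ Cmul l u = C1.
Proof.
  destruct (Csqrt_exists (Cadd (Cmul t t) (mkC (-4) 0))) as [s Hs].
  assert (H1 := f_equal Re Hs). assert (H2 := f_equal Im Hs). simpl in H1, H2.
  exists (Cmul (mkC (1/2) 0) (Cadd t s)), (Cmul (mkC (1/2) 0) (Csub t s)).
  split; apply Ceq; simpl; [field | field | nra | nra].
Qed.

(* On the unit circle [u = 1/l] is the conjugate of [l]. *)
Lemma unit_root_pair_sum (l u : C) : Cmul l u = C1 -> Cnorm2 l = 1 ->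
  Im (Cadd l u) = 0 /\ -2 <= Re (Cadd l u) <= 2.
Proof.
  destruct l as [a b], u as [c d]; unfold Cnorm2; simpl. intros Hlu Hl.
  assert (P1 := f_equal Re Hlu). assert (P2 := f_equal Im Hlu). simpl in P1, P2.
  assert (Ec : c = a).
  { transitivity (c * (a * a + b * b)); [rewrite Hl; ring |].
    transitivity (a * (a * c - b * d) + b * (a * d + b * c)); [ring |]. rewrite P1, P2; ring. }
  assert (Ed : d = - b).
  { transitivity (d * (a * a + b * b)); [rewrite Hl; ring |].
    transitivity (a * (a * d + b * c) - b * (a * c - b * d)); [ring |]. rewrite P1, P2; ring. }
  subst c d. split; [lra | split; nra].
Qed.

Lemma trace_eigenvalues (t : C) : ~ (Im t = 0 /\ -2 <= Re t <= 2) ->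
  exists l u, Cadd l u = t /\ Cmul l u = C1 /\ 1 < Cnorm2 l.
Proof.
  intro Ht. destruct (quadratic_roots t) as [l [u [Hsum Hlu]]].
  assert (Hn : Cnorm2 l * Cnorm2 u = 1) by (rewrite <- Cnorm2_mul, Hlu; unfold Cnorm2; simpl; ring).
  pose proof (Cnorm2_ge0 l). pose proof (Cnorm2_ge0 u).
  destruct (Rtotal_order (Cnorm2 l) 1) as [Hlt | [Heq | Hgt]].
  - exists u, l. repeat split; [rewrite <- Hsum; Cring | rewrite <- Hlu; Cring | nra].
  - exfalso. apply Ht. rewrite <- Hsum. now apply unit_root_pair_sum.
  - now exists l, u.
Qed.

Lemma eigenvalues_distinct (l u : C) : Cmul l u = C1 -> 1 < Cnorm2 l -> Csub l u <> C0.
Proof.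
  intros Hlu Hl E. apply Csub_eq0 in E. subst u.
  assert (Hn : Cnorm2 (Cmul l l) = 1) by (rewrite Hlu; unfold Cnorm2; simpl; ring).
  rewrite Cnorm2_mul in Hn. nra.
Qed.

Lemma loxodromic2_of_trace_norm (A : M2) : 4 < Cnorm2 (Mtr A) -> loxodromic2 A.
Proof. unfold loxodromic2, Cnorm2. intros H [H1 H2]. rewrite H1 in H. nra. Qed.

Lemma Mtr_comm (X Y : M2) : Mtr (Mmul X Y) = Mtr (Mmul Y X).
Proof. destruct X, Y; Cring. Qed.

Lemma loxodromic2_comm (X Y : M2) : loxodromic2 (Mmul X Y) -> loxodromic2 (Mmul Y X).
Proof. unfold loxodromic2. now rewrite Mtr_comm. Qed.

(* Cayley-Hamilton, [B^2 = tr B B - det B], multiplied by [X] and [P] and traced. *)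
Lemma Mtr_cayley_hamilton (X B P : M2) :
  Mtr (Mmul X (Mmul B (Mmul B P))) =
  Csub (Cmul (Mtr B) (Mtr (Mmul X (Mmul B P)))) (Cmul (Mdet B) (Mtr (Mmul X P))).
Proof. destruct X, B, P; Cring. Qed.

Definition cheb_rec (T : C) (d : nat -> C) : Prop :=
  forall m, d (S (S m)) = Csub (Cmul T (d (S m))) (d m).

(* [cheb T k] is the Chebyshev polynomial [U_(k-1)] evaluated at [T/2]. *)
Fixpoint cheb (T : C) (k : nat) : C :=
  match k with
  | O => C0
  | S O => C1
  | S (S k'' as k') => Csub (Cmul T (cheb T k')) (cheb T k'')
  end.

Lemma cheb_rec_cheb (T : C) : cheb_rec T (cheb T).
Proof. intro m; reflexivity. Qed.

Lemma cheb_rec_Mtr_pow (X B : M2) : Mdet B = C1 ->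
  cheb_rec (Mtr B) (fun n => Mtr (Mmul X (Mpow B n))).
Proof. intros HB n. cbn [Mpow]. rewrite Mtr_cayley_hamilton, HB. Cring. Qed.

Section ChebRec.

Variables (T : C) (d : nat -> C).
Hypothesis Hrec : cheb_rec T d.

Lemma cheb_rec_shift (m k : nat) :
  d (m + S k)%nat = Csub (Cmul (cheb T (S k)) (d (S m))) (Cmul (cheb T k) (d m)).
Proof.
  enough (H : d (m + S k)%nat = Csub (Cmul (cheb T (S k)) (d (S m))) (Cmul (cheb T k) (d m))
    /\ d (m + S (S k))%nat = Csub (Cmul (cheb T (S (S k))) (d (S m))) (Cmul (cheb T (S k)) (d m)))
    by exact (proj1 H).
  induction k as [|k [IH1 IH2]]; split.
  - replace (m + 1)%nat with (S m) by lia. simpl. Cring.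
  - replace (m + 2)%nat with (S (S m)) by lia. rewrite Hrec. simpl. Cring.
  - exact IH2.
  - replace (m + S (S (S k)))%nat with (S (S (m + S k))) by lia.
    rewrite Hrec. replace (S (m + S k)) with (m + S (S k))%nat by lia.
    rewrite IH1, IH2. cbn [cheb]. Cring.
Qed.

Lemma cheb_rec_zero_pair (m : nat) : d m = C0 -> d (S m) = C0 -> d 0%nat = C0 /\ d 1%nat = C0.
Proof.
  induction m as [|m IHm]; intros Zm ZSm; [now split |].
  apply IHm; [| exact Zm].
  pose proof (Hrec m) as E. rewrite Zm, ZSm in E.
  apply Ceq; [apply (f_equal Re) in E | apply (f_equal Im) in E]; simpl in *; lra.
Qed.

End ChebRec.

(* Two zeros [k+1] apart force [cheb T (k+1) = 0], so that shifting by [k+1]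
   multiplies [d] by the constant [- cheb T k]. *)
Lemma cheb_rec_two_zeros (T : C) (d : nat -> C) (m k : nat) :
  cheb_rec T d -> d 0%nat <> C0 -> d m = C0 -> d (m + S k)%nat = C0 ->
  forall j, d (j * S k)%nat <> C0.
Proof.
  intros Hrec H0 Zm Zmk.
  assert (HSm : d (S m) <> C0) by (intro E; exact (H0 (proj1 (cheb_rec_zero_pair T d Hrec m Zm E)))).
  assert (Hc : cheb T (S k) = C0).
  { apply (Cmul_eq0 _ (d (S m))); [| exact HSm].
    pose proof (cheb_rec_shift T d Hrec m k) as E. rewrite Zm, Zmk in E.
    apply Ceq; [apply (f_equal Re) in E | apply (f_equal Im) in E]; simpl in *; lra. }
  set (kappa := Copp (cheb T k)).
  assert (Hshift : forall n, d (n + S k)%nat = Cmul kappa (d n)).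
  { intro n. rewrite (cheb_rec_shift T d Hrec), Hc. unfold kappa. Cring. }
  assert (Hkappa : kappa <> C0).
  { intro E. assert (Hk : cheb T k = C0).
    { apply Ceq; [apply (f_equal Re) in E | apply (f_equal Im) in E]; unfold kappa in E; simpl in *; lra. }
    apply C1_neq0. exact (proj2 (cheb_rec_zero_pair T (cheb T) (cheb_rec_cheb T) k Hk Hc)). }
  intro j. assert (Hj : d (j * S k)%nat = Cmul (Cpow kappa j) (d 0%nat)).
  { induction j as [|j IHj]; [simpl; Cring |].
    replace (S j * S k)%nat with (j * S k + S k)%nat by lia.
    rewrite Hshift, IHj. simpl. Cring. }
  rewrite Hj. apply Cmul_neq0; [apply Cpow_neq0 |]; assumption.
Qed.

Definition eventually (P : nat -> Prop) : Prop :=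
  exists N, forall n, (N <= n)%nat -> P n.

Definition eventually_multiple (P : nat -> Prop) : Prop :=
  exists p, (0 < p)%nat /\ eventually (fun j => P (j * p)%nat).

Section FilterForall.

Variable F : (nat -> Prop) -> Prop.
Hypothesis F_true : F (fun _ => True).
Hypothesis F_mono : forall P Q : nat -> Prop, (forall n, P n -> Q n) -> F P -> F Q.
Hypothesis F_and : forall P Q : nat -> Prop, F P -> F Q -> F (fun n => P n /\ Q n).

Lemma filter_forall_lt (q : nat) (P : nat -> nat -> Prop) :
  (forall i, (i < q)%nat -> F (P i)) -> F (fun n => forall i, (i < q)%nat -> P i n).
Proof.
  induction q as [|q IHq]; intro HP.
  - apply (F_mono (fun _ => True)); [intros n _ i Hi; exfalso; lia | exact F_true].
  - apply (F_mono (fun n => (forall i, (i < q)%nat -> P i n) /\ P q n)).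
    + intros n [Hlt Hq] i Hi. destruct (Nat.eq_dec i q) as [-> | Hne]; [exact Hq | apply Hlt; lia].
    + apply F_and; [apply IHq; intros i Hi |]; apply HP; lia.
Qed.

End FilterForall.

Lemma eventually_true : eventually (fun _ => True).
Proof. now exists 0%nat. Qed.

Lemma eventually_mono (P Q : nat -> Prop) : (forall n, P n -> Q n) -> eventually P -> eventually Q.
Proof. intros HPQ [N HN]. exists N. auto. Qed.

Lemma eventually_and (P Q : nat -> Prop) :
  eventually P -> eventually Q -> eventually (fun n => P n /\ Q n).
Proof. intros [N1 H1] [N2 H2]. exists (Nat.max N1 N2). intros n Hn; split; [apply H1 | apply H2]; lia. Qed.

Lemma eventually_multiple_true : eventually_multiple (fun _ => True).
Proof. exists 1%nat. split; [lia | apply eventually_true]. Qed.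

Lemma eventually_multiple_mono (P Q : nat -> Prop) :
  (forall n, P n -> Q n) -> eventually_multiple P -> eventually_multiple Q.
Proof. intros HPQ [p [Hp HP]]. exists p. split; [exact Hp |]. eapply eventually_mono; [| exact HP]. auto. Qed.

Lemma eventually_multiple_and (P Q : nat -> Prop) :
  eventually_multiple P -> eventually_multiple Q -> eventually_multiple (fun n => P n /\ Q n).
Proof.
  intros [p1 [Hp1 [N1 H1]]] [p2 [Hp2 [N2 H2]]].
  exists (p1 * p2)%nat. split; [nia |]. exists (Nat.max N1 N2). intros j Hj. split.
  - replace (j * (p1 * p2))%nat with (j * p2 * p1)%nat by ring. apply H1. nia.
  - replace (j * (p1 * p2))%nat with (j * p1 * p2)%nat by ring. apply H2. nia.
Qed.

Lemma cheb_rec_nonzero_multiples (T : C) (d : nat -> C) :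
  cheb_rec T d -> d 0%nat <> C0 -> eventually_multiple (fun m => d m <> C0).
Proof.
  intros Hrec H0.
  destruct (classic (exists m k, d m = C0 /\ d (m + S k)%nat = C0)) as [[m [k [Zm Zmk]]] | Hzeros].
  - exists (S k). split; [lia |]. exists 0%nat. intros j _.
    exact (cheb_rec_two_zeros T d m k Hrec H0 Zm Zmk j).
  - exists 1%nat. split; [lia |].
    destruct (classic (exists m, d m = C0)) as [[m Zm] | Hnone].
    + exists (S m). intros j Hj Zj. apply Hzeros. exists m, (j - S m)%nat.
      replace (m + S (j - S m))%nat with (j * 1)%nat by lia. now split.
    + exists 0%nat. intros j _ Zj. apply Hnone. eauto.
Qed.

Lemma geometric_seq (c : C) (y : nat -> C) :
  (forall n, y (S n) = Cmul c (y n)) -> forall n, y n = Cmul (Cpow c n) (y 0%nat).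
Proof.
  intros Hy n. induction n as [|n IHn]; [simpl; Cring |].
  rewrite Hy, IHn. simpl. Cring.
Qed.

Lemma cheb_rec_binet (l u : C) (x : nat -> C) : Cmul l u = C1 -> cheb_rec (Cadd l u) x ->
  forall n, Cmul (Cpow l n) (Csub (x 1%nat) (Cmul u (x 0%nat))) =
    Cadd (Cmul (Csub l u) (x n)) (Cmul (Cpow u n) (Csub (x 1%nat) (Cmul l (x 0%nat)))).
Proof.
  intros Hlu Hrec n.
  assert (HU : forall n, Csub (x (S (S n))) (Cmul u (x (S n))) = Cmul l (Csub (x (S n)) (Cmul u (x n)))).
  { intro k. rewrite Hrec.
    transitivity (Csub (Cmul l (x (S k))) (Cmul (Cmul l u) (x k))); [rewrite Hlu |]; Cring. }
  assert (HV : forall n, Csub (x (S (S n))) (Cmul l (x (S n))) = Cmul u (Csub (x (S n)) (Cmul l (x n)))).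
  { intro k. rewrite Hrec.
    transitivity (Csub (Cmul u (x (S k))) (Cmul (Cmul l u) (x k))); [rewrite Hlu |]; Cring. }
  rewrite <- (geometric_seq l (fun n => Csub (x (S n)) (Cmul u (x n))) HU n).
  rewrite <- (geometric_seq u (fun n => Csub (x (S n)) (Cmul l (x n))) HV n).
  Cring.
Qed.

Lemma cheb_rec_norm_unbounded (l u : C) (x : nat -> C) :
  Cmul l u = C1 -> 1 < Cnorm2 l -> cheb_rec (Cadd l u) x ->
  Csub (x 1%nat) (Cmul u (x 0%nat)) <> C0 ->
  forall M, eventually (fun n => M < Cnorm2 (x n)).
Proof.
  intros Hlu Hl Hrec HU M.
  set (D := Cnorm2 (Csub (x 1%nat) (Cmul u (x 0%nat)))).
  set (E := Cnorm2 (Csub (x 1%nat) (Cmul l (x 0%nat)))).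
  set (K := Cnorm2 (Csub l u)).
  assert (HD : 0 < D) by exact (Cnorm2_gt0 _ HU).
  assert (HK : 0 < K) by exact (Cnorm2_gt0 _ (eigenvalues_distinct l u Hlu Hl)).
  assert (HE : 0 <= E) by apply Cnorm2_ge0.
  assert (Hu : Cnorm2 u <= 1).
  { assert (Hn : Cnorm2 l * Cnorm2 u = 1) by (rewrite <- Cnorm2_mul, Hlu; unfold Cnorm2; simpl; ring).
    pose proof (Cnorm2_ge0 u). nra. }
  destruct (Pow_x_infinity (Cnorm2 l) ltac:(rewrite Rabs_pos_eq; lra) ((2 * K * M + 2 * E + 1) / D))
    as [N HN].
  exists N. intros n Hn.
  specialize (HN n Hn). rewrite Rabs_pos_eq in HN by (apply pow_le; lra).
  assert (Hgrow : 2 * K * M + 2 * E + 1 <= Cnorm2 l ^ n * D).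
  { apply Rge_le, (Rmult_le_compat_r D) in HN; [| lra].
    unfold Rdiv in HN. rewrite Rmult_assoc, Rinv_l in HN by lra. lra. }
  assert (Hun : Cnorm2 u ^ n <= 1) by (rewrite <- (pow1 n); apply pow_incr; split; [apply Cnorm2_ge0 | exact Hu]).
  pose proof (Cnorm2_add_le (Cmul (Csub l u) (x n)) (Cmul (Cpow u n) (Csub (x 1%nat) (Cmul l (x 0%nat))))) as Htri.
  rewrite <- cheb_rec_binet in Htri by assumption.
  rewrite !Cnorm2_mul, !Cnorm2_pow in Htri. fold D E K in Htri.
  pose proof (Cnorm2_ge0 (x n)). pose proof (pow_le (Cnorm2 u) n (Cnorm2_ge0 u)).
  nra.
Qed.

Lemma loxodromic2_power_products (A B : M2) : Mdet A = C1 -> Mdet B = C1 -> loxodromic2 B ->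
  eventually_multiple (fun m => eventually (fun n => loxodromic2 (Mmul (Mpow A m) (Mpow B n)))).
Proof.
  intros HA HB Hlox.
  destruct (trace_eigenvalues _ Hlox) as [l [u [Hsum [Hlu Hl]]]].
  set (x := fun m n => Mtr (Mmul (Mpow A m) (Mpow B n))).
  assert (Hx_n : forall m, cheb_rec (Cadd l u) (x m)).
  { intro m. rewrite Hsum. exact (cheb_rec_Mtr_pow _ B HB). }
  assert (Hx_m : forall n m, x (S (S m)) n = Csub (Cmul (Mtr A) (x (S m) n)) (x m n)).
  { intros n m. unfold x. rewrite !(Mtr_comm (Mpow A _)). exact (cheb_rec_Mtr_pow _ A HA m). }
  set (d := fun m => Csub (x m 1%nat) (Cmul u (x m 0%nat))).
  assert (Hd : cheb_rec (Mtr A) d) by (intro m; unfold d; rewrite !Hx_m; Cring).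
  assert (Hd0 : d 0%nat = Csub l u).
  { transitivity (Csub (Mtr B) (Cmul u (mkC 2 0))); [destruct B; Cring |].
    rewrite <- Hsum. Cring. }
  apply (eventually_multiple_mono (fun m => d m <> C0)).
  - intros m Hdm. apply (eventually_mono (fun n => 4 < Cnorm2 (x m n))).
    + intros n. apply loxodromic2_of_trace_norm.
    + exact (cheb_rec_norm_unbounded l u (x m) Hlu Hl (Hx_n m) Hdm 4).
  - apply (cheb_rec_nonzero_multiples _ _ Hd). rewrite Hd0.
    exact (eigenvalues_distinct l u Hlu Hl).
Qed.

Lemma loxodromic_power_products (q r : nat) (g h : Gelt) :
  inG q r g -> inG q r h -> loxodromic q r h ->
  eventually_multiple (fun m => eventually (fun n => loxodromic q r (Gmul (Gpow g m) (Gpow h n)))).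
Proof.
  intros [Hg1 Hg2] [Hh1 Hh2] [Hl1 Hl2].
  pose proof (filter_forall_lt _ eventually_true eventually_mono eventually_and) as Hev.
  pose proof (filter_forall_lt _ eventually_multiple_true eventually_multiple_mono
    eventually_multiple_and) as Hevm.
  assert (Hc1 : forall i, (i < q)%nat -> eventually_multiple (fun m => eventually (fun n =>
    loxodromic2 (Mmul (Mpow (fst g i) m) (Mpow (fst h i) n)))))
    by (intros i Hi; apply loxodromic2_power_products; [apply Hg1 | apply Hh1 | apply Hl1]; exact Hi).
  assert (Hc2 : forall j, (j < r)%nat -> eventually_multiple (fun m => eventually (fun n =>
    loxodromic2 (Mmul (Mpow (snd g j) m) (Mpow (snd h j) n)))))
    by (intros j Hj; apply loxodromic2_power_products;
        [apply (Hg2 j Hj) | apply (Hh2 j Hj) | apply Hl2; exact Hj]).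
  eapply eventually_multiple_mono; [| exact (eventually_multiple_and _ _ (Hevm _ _ Hc1) (Hevm _ _ Hc2))].
  intros m [Hq Hr]. eapply eventually_mono; [| exact (eventually_and _ _ (Hev _ _ Hq) (Hev _ _ Hr))].
  intros n Hn. exact Hn.
Qed.

Lemma loxodromic_Gmul_comm (q r : nat) (g h : Gelt) :
  loxodromic q r (Gmul g h) -> loxodromic q r (Gmul h g).
Proof. intros [H1 H2]; split; intros i Hi; apply loxodromic2_comm; [apply H1 | apply H2]; exact Hi. Qed.

Theorem lemmaL (q r : nat) (g h : Gelt) :
  inG q r g -> inG q r h ->
  elliptic q r g -> infinite_order q r g ->
  loxodromic q r h ->
  exists m n : nat, (0 < m)%nat /\ (0 < n)%nat /\
    loxodromic q r (Gmul (Gpow g m) (Gpow h n)) /\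
    loxodromic q r (Gmul (Gpow h n) (Gpow g m)).
Proof.
  intros Hg Hh _ _ Hlox.
  destruct (loxodromic_power_products q r g h Hg Hh Hlox) as [p [Hp [M HM]]].
  destruct (HM (S M) (Nat.le_succ_diag_r M)) as [N HN].
  pose proof (HN (S N) (Nat.le_succ_diag_r N)) as Hgh.
  exists (S M * p)%nat, (S N).
  split; [nia |]. split; [lia |].
  split; [exact Hgh | exact (loxodromic_Gmul_comm _ _ _ _ Hgh)].
Qed.
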